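(* Let $R>0$ and let $A\subset\mathbb{R}^d$ be an $R$-supported body. Then $A$ is an $R$-body if and only if $$A=A_R\cap\Big(\bigcap_{a\in\partial A}C^a_{\mathcal{N}_R(A,a)}\Big).$$
   Context: A body is a nonempty closed subset of $\mathbb{R}^d$; $S^{d-1}$ is the unit sphere; $B(x)=\{y:|y-x|<R\}$; $A_R=\{x:\operatorname{dist}(x,A)<R\}$. A body $A$ is an $R$-body if every $y\notin A$ lies in some open ball of radius $R$ disjoint from $A$ (so $\mathbb{R}^d$ is an $R$-body). For $a\in\partial A$, $\mathcal{N}_R(A,a)=\{v\in S^{d-1}: A\cap B(a+Rv)=\emptyset\}$; $A$ is $R$-supported if $\mathcal{N}_R(A,a)\ne\emptyset$ for all $a\in\partial A$. For nonempty closed $\mathcal K\subset S^{d-1}$ and $x\in\mathbb{R}^d$, $C^x_{\mathcal K}=\bigcap_{v\in\mathcal K}(\mathbb{R}^d\setminus B(x+Rv))$. An intersection over an empty index set is $\mathbb{R}^d$. *)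

From mathcomp Require Import all_boot all_order all_algebra.
From mathcomp Require Import reals.
Set Implicit Arguments. Unset Strict Implicit. Unset Printing Implicit Defensive.
Import Order.TTheory GRing.Theory Num.Theory.
Local Open Scope ring_scope.

Section Defs.
Variables (R : realType) (d : nat).
Notation pt := 'rV[R]_d.

Definition enorm (x : pt) : R := Num.sqrt (\sum_(i < d) x ord0 i ^+ 2).
Definition edist (x y : pt) : R := enorm (x - y).

Definition oball (x : pt) (r : R) : pt -> Prop := fun y => edist y x < r.

Definition usphere : pt -> Prop := fun v => enorm v = 1.

Definition eclosed (A : pt -> Prop) : Prop :=
  forall x, (forall e : R, 0 < e -> exists y, A y /\ edist y x < e) -> A x.

Definition body (A : pt -> Prop) : Prop := (exists a, A a) /\ eclosed A.

Definition boundary (A : pt -> Prop) (a : pt) : Prop :=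
  forall e : R, 0 < e ->
    (exists y, A y /\ edist y a < e) /\ (exists y, ~ A y /\ edist y a < e).

(* A_R = {x : dist(x, A) < R} *)
Definition thick (A : pt -> Prop) (r : R) : pt -> Prop :=
  fun x => exists a, A a /\ edist x a < r.

Definition Rbody (r : R) (A : pt -> Prop) : Prop :=
  forall y, ~ A y -> exists x, oball x r y /\ (forall z, A z -> ~ oball x r z).

Definition normalsR (r : R) (A : pt -> Prop) (a : pt) : pt -> Prop :=
  fun v => usphere v /\ (forall z, A z -> ~ oball (a + r *: v) r z).

Definition Rsupported (r : R) (A : pt -> Prop) : Prop :=
  forall a, A a -> boundary A a -> exists v, normalsR r A a v.

Definition Ccap (r : R) (K : pt -> Prop) (x : pt) : pt -> Prop :=
  fun y => forall v, K v -> ~ oball (x + r *: v) r y.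

End Defs.

(* If A is an R-body and y lies within distance R of A but outside A, take an
   R-ball disjoint from A that contains y and slide its centre along the
   segment towards y until the ball first touches A, at a point a.  The ball
   still contains y, a is a boundary point of A, and the unit vector from a to
   the centre is an R-normal of A at a, so y is cut out by C^a_{N_R(A,a)}.
   Conversely, a point outside the right-hand side either lies in some ball
   B(a + R v) disjoint from A or is at distance at least R from A; in both
   cases it lies in an open R-ball disjoint from A. *)

From mathcomp Require Import all_boot all_order all_algebra.
From mathcomp Require Import boolp classical_sets reals topology normedtype derive.
From mathcomp Require Import ring lra.
Import Order.TTheory GRing.Theory Num.Theory.
Import numFieldTopology.Exports numFieldNormedType.Exports.
Set Implicit Arguments.
Local Open Scope ring_scope.

Lemma quadratic_ge0_discr (F : realFieldType) (a b c : F) : 0 <= a ->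
  (forall s, 0 <= a * s ^+ 2 - 2 * b * s + c) -> b ^+ 2 <= a * c.
Proof.
move=> a_ge0 q_ge0; have [a0|a_neq0] := eqVneq a 0.
  have [b0|b_neq0] := eqVneq b 0; first by rewrite a0 b0; lra.
  have := q_ge0 ((c + 1) / (2 * b)); rewrite a0.
  have -> : 2 * b * ((c + 1) / (2 * b)) = c + 1 by field; rewrite b_neq0.
  lra.
have a_gt0 : 0 < a by rewrite lt_def a_neq0.
have := q_ge0 (b / a).
have -> : a * (b / a) ^+ 2 - 2 * b * (b / a) + c = (a * c - b ^+ 2) / a by field.
by rewrite pmulr_lge0 ?invr_gt0 // subr_ge0.
Qed.

Section EuclideanNorm.
Context {R : realType} {d : nat}.
Notation pt := 'rV[R]_d.
Implicit Types (u v x y z : pt).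

Definition sqnorm v : R := \sum_(i < d) v ord0 i ^+ 2.
Definition dotp u v : R := \sum_(i < d) u ord0 i * v ord0 i.

Lemma sqnorm_ge0 v : 0 <= sqnorm v.
Proof. by apply: sumr_ge0 => i _; rewrite sqr_ge0. Qed.

Lemma enorm_ge0 v : 0 <= enorm v.
Proof. exact: sqrtr_ge0. Qed.

Lemma enorm_sqr v : enorm v ^+ 2 = sqnorm v.
Proof. by rewrite sqr_sqrtr // sqnorm_ge0. Qed.

Lemma sqnormD u v : sqnorm (u + v) = sqnorm u + 2 * dotp u v + sqnorm v.
Proof.
rewrite /sqnorm /dotp mulr_sumr -!big_split /=; apply: eq_bigr => i _.
by rewrite mxE; ring.
Qed.

Lemma sqnormZ k v : sqnorm (k *: v) = k ^+ 2 * sqnorm v.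
Proof. by rewrite /sqnorm mulr_sumr; apply: eq_bigr => i _; rewrite mxE; ring. Qed.

Lemma dotpZl k u v : dotp (k *: u) v = k * dotp u v.
Proof. by rewrite /dotp mulr_sumr; apply: eq_bigr => i _; rewrite mxE mulrA. Qed.

Lemma dotp_le u v : dotp u v <= enorm u * enorm v.
Proof.
have CS : dotp u v ^+ 2 <= sqnorm u * sqnorm v.
  apply: quadratic_ge0_discr (sqnorm_ge0 u) _ => s.
  have dotpN : dotp u ((-1) *: v) = - dotp u v.
    by rewrite /dotp -sumrN; apply: eq_bigr => i _; rewrite mxE; ring.
  have := sqnorm_ge0 (s *: u + (-1) *: v).
  rewrite sqnormD !sqnormZ dotpZl dotpN; lra.
rewrite -!enorm_sqr -exprMn in CS.
have := mulr_ge0 (enorm_ge0 u) (enorm_ge0 v); nra.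
Qed.

Lemma enormD u v : enorm (u + v) <= enorm u + enorm v.
Proof.
rewrite -(ler_pXn2r (_ : 0 < 2)%N) ?nnegrE ?addr_ge0 ?enorm_ge0 //.
rewrite enorm_sqr sqnormD sqrrD !enorm_sqr.
have := dotp_le u v; lra.
Qed.

Lemma enormZ k v : enorm (k *: v) = `|k| * enorm v.
Proof. by rewrite /enorm -/(sqnorm _) sqnormZ sqrtrM ?sqr_ge0 // sqrtr_sqr. Qed.

Lemma enormN v : enorm (- v) = enorm v.
Proof. by rewrite -scaleN1r enormZ normrN normr1 mul1r. Qed.

Lemma edistC x y : edist x y = edist y x.
Proof. by rewrite /edist -enormN opprB. Qed.

Lemma edistxx x : edist x x = 0.
Proof. by rewrite /edist subrr -(scale0r 0) enormZ normr0 mul0r. Qed.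

Lemma edist_triangle x y z : edist x z <= edist x y + edist y z.
Proof. by rewrite /edist -[x - z](subrKA y); exact: enormD. Qed.

Lemma edist_ge0 x y : 0 <= edist x y.
Proof. exact: enorm_ge0. Qed.

Lemma edist_lerp x y t s :
  edist (x + t *: (y - x)) (x + s *: (y - x)) = `|t - s| * edist y x.
Proof. by rewrite /edist opprD addrACA subrr add0r -scalerBl enormZ. Qed.

Lemma coord_le_enorm v i : `|v ord0 i| <= enorm v.
Proof.
rewrite -(ler_pXn2r (_ : 0 < 2)%N) ?nnegrE ?enorm_ge0 // enorm_sqr.
rewrite real_normK ?num_real // /sqnorm (bigD1 i) //= lerDl.
by apply: sumr_ge0 => j _; exact: sqr_ge0.
Qed.

Lemma mx_norm_le_enorm v : `|v| <= enorm v.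
Proof.
rewrite [leLHS]/Num.norm /= mx_normrE.
apply: bigmax_le => [|[i j] _]; first exact: enorm_ge0.
by rewrite /= (ord1 i); exact: coord_le_enorm.
Qed.

Lemma enorm_le_mx_norm v : enorm v <= d.+1%:R * `|v|.
Proof.
rewrite -(ler_pXn2r (_ : 0 < 2)%N) ?nnegrE ?enorm_ge0 ?mulr_ge0 // enorm_sqr.
have coord_sqr_le i : v ord0 i ^+ 2 <= `|v| ^+ 2.
  rewrite -real_normK ?num_real // lerXn2r ?nnegrE //.
  by rewrite [leRHS]/Num.norm /= mx_normrE; apply/bigmax_geP; right; exists (ord0, i).
apply: (@le_trans _ _ (d%:R * `|v| ^+ 2)).
  have -> : d%:R * `|v| ^+ 2 = \sum_(i < d) `|v| ^+ 2 :> R.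
    by rewrite sumr_const card_ord mulr_natl.
  exact: ler_sum.
rewrite exprMn -natrX ler_wpM2r ?sqr_ge0 // ler_nat.
by rewrite expnS (leq_trans (leqnSn d)) // leq_pmulr.
Qed.

Lemma nbhs_edist_lt (p : pt) (e : R) : 0 < e -> nbhs p (fun z => edist z p < e).
Proof.
move=> e_gt0; apply/nbhs_ballP; exists (e / d.+1%:R) => /=; first by rewrite divr_gt0.
move=> z; rewrite -ball_normE /ball_ /= => pz.
rewrite /edist -enormN opprB (le_lt_trans (enorm_le_mx_norm _)) //.
by rewrite mulrC -ltr_pdivlMr.
Qed.

Lemma eclosed_closed (K : set pt) : eclosed K -> closed K.
Proof.
move=> K_closed p Kp; apply: K_closed => e e_gt0.
by have [z [Kz pz]] := Kp _ (nbhs_edist_lt p e e_gt0); exists z.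
Qed.

Lemma continuous_edist p : continuous (fun a : pt => edist p a).
Proof.
move=> a; apply/(@cvgrPdist_lt _ _ _ _ (nbhs_filter a)) => e e_gt0.
apply: filterS (nbhs_edist_lt a e e_gt0) => b /= ba.
have := edist_triangle p b a; have := edist_triangle p a b.
by rewrite (edistC a b) ltr_norml => *; apply/andP; split; lra.
Qed.

Lemma bounded_set_enorm (K : set pt) M :
  (forall a, K a -> enorm a <= M) -> bounded_set K.
Proof.
move=> KM; exists M; split; first exact: num_real.
move=> N MN a Ka; apply: le_trans (mx_norm_le_enorm a) _.
exact: le_trans (KM a Ka) (ltW MN).
Qed.

Lemma eclosedI (A B : pt -> Prop) : eclosed A -> eclosed B -> eclosed (A `&` B)%classic.
Proof.
move=> Acl Bcl p Hp; split.
- by apply: Acl => e /Hp[z [[Az _] pz]]; exists z.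
- by apply: Bcl => e /Hp[z [[_ Bz] pz]]; exists z.
Qed.

Lemma eclosed_edist_le p M : eclosed (fun z => edist p z <= M).
Proof.
move=> z Hz; rewrite leNgt; apply/negP => Mz.
have [y [yM yz]] := Hz (edist p z - M) (ltac:(by rewrite subr_gt0)).
have := edist_triangle p y z; lra.
Qed.

Lemma nearest_point (A : pt -> Prop) p : body A ->
  exists2 a, A a & forall z, A z -> edist p a <= edist p z.
Proof.
move=> [[a0 Aa0] Acl].
pose K := (A `&` (fun z => edist p z <= edist p a0))%classic.
have K0 : (K !=set0)%classic by exists a0; split.
have Kcompact : compact K.
  apply: bounded_closed_compact.
    apply: (@bounded_set_enorm _ (enorm p + edist p a0)) => a [_ pa].
    have := enormD p (a - p); rewrite addrC subrK -/(edist a p) edistC; lra.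
  apply: eclosed_closed; exact: eclosedI Acl (eclosed_edist_le p _).
have [a /set_mem[Aa _] amin] :=
  compact_EVT_min K0 Kcompact (continuous_subspaceT (@continuous_edist p)).
exists a => // z Az; have [pz|] := leP (edist p z) (edist p a0).
  by apply: amin; apply: mem_set.
by move/ltW; apply: le_trans; apply: amin; apply: mem_set.
Qed.

End EuclideanNorm.

Section TouchingBall.
Context {R : realType} {d : nat}.
Notation pt := 'rV[R]_d.
Implicit Types (A : pt -> Prop) (a p y : pt).

Definition touching_ball (A : pt -> Prop) (p : pt) (r : R) (a : pt) : Prop :=
  [/\ A a, edist p a = r & forall z, A z -> r <= edist p z].

Lemma touching_ball_boundary A p r a :
  0 < r -> touching_ball A p r a -> boundary A a.
Proof.
move=> r_gt0 [Aa pa p_away] e e_gt0; split; first by exists a; rewrite edistxx.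
pose s := e / (e + r).
have s_gt0 : 0 < s by rewrite divr_gt0 // addr_gt0.
have s_lt1 : s < 1 by rewrite ltr_pdivrMr ?addr_gt0 // mul1r ltrDl.
have se : s * (e + r) = e by rewrite mulfVK // gt_eqF // addr_gt0.
exists (a + s *: (p - a)); split.
  have shrink : p - (a + s *: (p - a)) = (1 - s) *: (p - a).
    by rewrite scalerBl scale1r opprD addrA.
  move=> /p_away; rewrite /edist shrink enormZ -/(edist p a) pa gtr0_norm ?subr_gt0 //; nra.
rewrite /edist addrAC subrr add0r enormZ -/(edist p a) pa gtr0_norm //; nra.
Qed.

Lemma touching_ball_normal A p r a : 0 < r -> touching_ball A p r a ->
  exists2 v, normalsR r A a v & a + r *: v = p.
Proof.
move=> r_gt0 [_ pa p_away]; exists (r^-1 *: (p - a)); last first.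
  by rewrite scalerA mulfV ?gt_eqF // scale1r addrC subrK.
split; last first.
  move=> z /p_away; rewrite scalerA mulfV ?gt_eqF // scale1r addrC subrK.
  by rewrite /oball edistC leNgt => /negP.
rewrite /usphere enormZ ger0_norm ?invr_ge0 ?ltW // -/(edist p a) pa.
by rewrite mulVf ?gt_eqF.
Qed.

Section FirstContact.
Variables (A : pt -> Prop) (r : R) (x y : pt).
Hypotheses (A_body : body A) (x_away : forall z, A z -> r <= edist x z).
Hypothesis y_near : thick A r y.

Let c t := x + t *: (y - x).
Let contact : set R := fun t => 0 <= t <= 1 /\ exists2 a, A a & edist (c t) a <= r.
Let t0 := inf contact.

Let contact1 : contact 1.
Proof.
split; first by rewrite ler01 lexx.
have [a [Aa ya]] := y_near.
by exists a; rewrite // /c scale1r addrC subrK ltW.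
Qed.

Let contact_has_inf : has_inf contact.
Proof. by split; [exists 1 | exists 0 => t [/andP[]]]. Qed.

Let t0_ge0 : 0 <= t0.
Proof. by apply: lb_le_inf; [exists 1 | move=> t [/andP[]]]. Qed.

Let t0_le1 : t0 <= 1.
Proof. exact: (ge_inf contact_has_inf.2 contact1). Qed.

Let edist_c t s : edist (c t) (c s) = `|t - s| * edist y x.
Proof. exact: edist_lerp. Qed.

Let t0_away z : A z -> r <= edist (c t0) z.
Proof.
move=> Az; rewrite leNgt; apply/negP => t0z.
have [t0_le0|t0_gt0] := leP t0 0.
  have t0_0 : t0 = 0 by apply/eqP; rewrite eq_le t0_le0 t0_ge0.
  by move: t0z; rewrite /c t0_0 scale0r addr0 ltNge x_away.
pose del := r - edist (c t0) z.
have del_gt0 : 0 < del by rewrite subr_gt0.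
have yx1_gt0 : 0 < edist y x + 1 by rewrite ltr_wpDl ?edist_ge0.
pose q := del / (edist y x + 1).
have q_gt0 : 0 < q by rewrite divr_gt0.
have qdel : q * (edist y x + 1) = del by rewrite mulfVK // gt_eqF.
pose eta := Num.min t0 q.
have eta_le_t0 : eta <= t0 by rewrite ge_min lexx.
have eta_le_q : eta <= q by rewrite ge_min lexx orbT.
have eta_gt0 : 0 < eta by rewrite lt_min t0_gt0 q_gt0.
have contact_t : contact (t0 - eta / 2).
  split; first by apply/andP; split; have := t0_le1; lra.
  exists z => //; apply: le_trans (edist_triangle _ (c t0) _) _.
  rewrite edist_c addrAC subrr add0r normrN ger0_norm; last lra.
  have := edist_ge0 y x; rewrite -[edist (c t0) z](subKr r) -/del; nra.
have := ge_inf contact_has_inf.2 contact_t; lra.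
Qed.

Let t0_near e : 0 < e -> exists2 a, A a & edist (c t0) a <= r + e.
Proof.
move=> e_gt0.
have yx1_gt0 : 0 < edist y x + 1 by rewrite ltr_wpDl ?edist_ge0.
pose q := e / (edist y x + 1).
have q_gt0 : 0 < q by rewrite divr_gt0.
have qe : q * (edist y x + 1) = e by rewrite mulfVK // gt_eqF.
have [t contact_t t_lt] := inf_adherent q_gt0 contact_has_inf.
have t0_le_t : t0 <= t := ge_inf contact_has_inf.2 contact_t.
have [_ [a Aa ta]] := contact_t.
exists a => //; apply: le_trans (edist_triangle _ (c t) _) _.
rewrite edist_c distrC ger0_norm ?subr_ge0 //.
have := edist_ge0 y x; rewrite -/t0 in t_lt; nra.
Qed.

Lemma touching_ball_on_segment :
  exists2 t, 0 <= t <= 1 & exists a, touching_ball A (x + t *: (y - x)) r a.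
Proof.
exists t0; first by rewrite t0_ge0 t0_le1.
have [a Aa a_nearest] := nearest_point (c t0) A_body.
exists a; split => //.
apply/eqP; rewrite eq_le t0_away // andbT; apply/ler_addgt0Pr => e /t0_near[b Ab].
exact/le_trans/a_nearest.
Qed.

End FirstContact.

Lemma thick_Ccap_of_mem A r y : 0 < r -> A y ->
  thick A r y /\ (forall a, A a -> boundary A a -> Ccap r (normalsR r A a) a y).
Proof.
move=> r_gt0 Ay; split; first by exists y; rewrite edistxx.
by move=> a _ _ v [_ v_free]; exact: v_free.
Qed.

Lemma Rbody_of_eq_thick_Ccap A r : 0 < r ->
  (forall y, A y <->
     thick A r y /\ (forall a, A a -> boundary A a -> Ccap r (normalsR r A a) a y)) ->
  Rbody r A.
Proof.
move=> r_gt0 A_eq y yNA; have [y_near|y_far] := pselect (thick A r y).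
  have /existsNP[a /not_implyP[Aa /not_implyP[_ /existsNP[v]]]] :
      ~ (forall a, A a -> boundary A a -> Ccap r (normalsR r A a) a y).
    by move=> y_Ccap; apply/yNA/A_eq.
  move=> /not_implyP[[_ v_free] /contrapT y_in].
  by exists (a + r *: v).
exists y; split; first by rewrite /oball edistxx.
by move=> z Az yz; apply: y_far; exists z; rewrite edistC.
Qed.

End TouchingBall.

Theorem mainTheorem13 (R : realType) (d : nat) (r : R) (A : 'rV[R]_d -> Prop) :
  0 < r -> body A -> Rsupported r A ->
  (Rbody r A <->
   (forall y, A y <->
      (thick A r y /\
       (forall a, A a -> boundary A a -> Ccap r (normalsR r A a) a y)))).
Proof.
move=> r_gt0 A_body _; split; last exact: Rbody_of_eq_thick_Ccap.
move=> A_Rbody y; split; first exact: thick_Ccap_of_mem.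
move=> [y_near y_Ccap]; apply: contrapT => yNA.
have [x [y_in_x x_free]] := A_Rbody y yNA.
have x_away z : A z -> r <= edist x z.
  by move=> /x_free; rewrite /oball edistC leNgt => /negP.
have [t /andP[t_ge0 t_le1] [a touch]] := touching_ball_on_segment x A_body x_away y_near.
have [v v_normal center] := touching_ball_normal r_gt0 touch.
apply: (y_Ccap a _ (touching_ball_boundary r_gt0 touch) v v_normal); first by case: touch.
have y_on_segment : y = x + 1 *: (y - x) by rewrite scale1r addrC subrK.
rewrite center /oball {1}y_on_segment edist_lerp ger0_norm ?subr_ge0 //.
move: y_in_x; rewrite /oball; have := edist_ge0 y x; nra.
Qed.
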